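(* Let $G$ be a finite non-abelian group. Then the non-centralizer graph $\Upsilon_G$ is regular if and only if $|\mathrm{Cent}(G)|=[G:Z(G)]$.
   Context: For a finite group $G$ and $x\in G$, $C_G(x)$ denotes the centralizer of $x$, $Z(G)$ the center, and $\mathrm{Cent}(G)=\{C_G(x)\mid x\in G\}$ the set of distinct centralizers of $G$. The non-centralizer graph $\Upsilon_G$ is the simple graph with vertex set $G$ in which two distinct vertices $x,y$ are adjacent if and only if $C_G(x)\neq C_G(y)$. A graph is regular if all its vertices have the same degree. *)

From mathcomp Require Import all_boot all_fingroup.
Set Implicit Arguments. Unset Strict Implicit. Unset Printing Implicit Defensive.
Local Open Scope group_scope.

Definition Cent (gT : finGroupType) (G : {set gT}) : {set {set gT}} :=
  [set 'C_G[x] | x in G].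

Definition ncadj (gT : finGroupType) (G : {set gT}) (x y : gT) : bool :=
  (x != y) && ('C_G[x] != 'C_G[y]).

Definition ncdeg (gT : finGroupType) (G : {set gT}) (x : gT) : nat :=
  #|[set y in G | ncadj G x y]|.

Definition nc_regular (gT : finGroupType) (G : {set gT}) : Prop :=
  forall x y, x \in G -> y \in G -> ncdeg G x = ncdeg G y.

From mathcomp Require Import all_boot all_fingroup all_solvable.
Set Implicit Arguments. Unset Strict Implicit.
Local Open Scope group_scope.

(* The vertices with the same centralizer as x form the class K(x), and the
   degree of x is |G| - |K(x)|.  Every class contains the coset x Z(G), with
   equality for x = 1, and the classes partition G into |Cent(G)| blocks.
   Hence the graph is regular iff every class has exactly |Z(G)| elements,
   iff |G| = |Cent(G)| |Z(G)|, iff |Cent(G)| = [G : Z(G)]. *)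

Definition cent_class (gT : finGroupType) (G : {set gT}) (x : gT) : {set gT} :=
  [set y in G | 'C_G[y] == 'C_G[x]].

Section CentralizerClasses.

Variables (gT : finGroupType) (G : {group gT}).

Lemma ncdeg_add_card_cent_class x : ncdeg G x + #|cent_class G x| = #|G|.
Proof.
have sKG : cent_class G x \subset G by apply/subsetP => y /setIdP[].
rewrite /ncdeg; have -> : [set y in G | ncadj G x y] = G :\: cent_class G x.
  apply/setP => y; rewrite !inE /ncadj; case: (y \in G); rewrite /= ?andbF ?andbT //.
  by case: eqVneq => [<-|_]; rewrite ?eqxx // eq_sym.
by rewrite -(cardsID (cent_class G x) G) (setIidPr sKG) addnC.
Qed.

Lemma lcoset_center_sub_cent_class x : x \in G -> x *: 'Z(G) \subset cent_class G x.
Proof.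
move=> xG; apply/subsetP => _ /lcosetP[z /setIP[zG /centP cGz] ->].
rewrite inE groupM //=; apply/eqP/setP => t; rewrite !in_setI.
case tG: (t \in G) => //=.
by rewrite cent1C [t \in 'C[x]]cent1C groupMr //; apply/cent1P/cGz.
Qed.

Lemma card_center_le_cent_class x : x \in G -> #|'Z(G)| <= #|cent_class G x|.
Proof.
by move=> xG; rewrite -(card_lcoset _ x) subset_leq_card ?lcoset_center_sub_cent_class.
Qed.

Lemma cent_class1 : cent_class G 1 = 'Z(G).
Proof.
apply/eqP; rewrite eqEsubset -{2}(lcoset1 'Z(G)).
rewrite lcoset_center_sub_cent_class // andbT.
apply/subsetP => y /setIdP[yG]; rewrite cent11T setIT => /eqP eqCG.
by rewrite inE yG /= -sub_cent1 -eqCG subsetIr.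
Qed.

Lemma card_eq_sum_card_cent_class :
  #|G| = \sum_(C in Cent G) #|[set y in G | 'C_G[y] == C]|.
Proof.
rewrite -sum1_card (partition_big_imset (fun y => 'C_G[y])) /=.
by apply: eq_bigr => C _; rewrite -sum1_card; apply: eq_bigl => y; rewrite inE.
Qed.

Lemma card_eq_Cent_mul_centerP :
  #|G| = (#|Cent G| * #|'Z(G)|)%N <-> {in G, forall x, #|cent_class G x| = #|'Z(G)|}.
Proof.
have leZK : forall C, C \in Cent G ->
    #|'Z(G)| <= #|[set y in G | 'C_G[y] == C]|
             ?= iff (#|'Z(G)| == #|[set y in G | 'C_G[y] == C]|).
  by move=> _ /imsetP[x xG ->]; apply/leqif_eq/card_center_le_cent_class.
have [_ eqC] := leqif_sum leZK.
rewrite sum_nat_const -card_eq_sum_card_cent_class in eqC.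
split=> [eqG x xG | eqK].
  by move: eqC; rewrite eqG eqxx => /esym/forall_inP/(_ _ (imset_f _ xG))/eqP ->.
apply/eqP; rewrite eq_sym eqC; apply/forall_inP => _ /imsetP[x xG ->].
exact/eqP/esym/(eqK x xG).
Qed.

Lemma nc_regularP : nc_regular G <-> {in G, forall x, #|cent_class G x| = #|'Z(G)|}.
Proof.
rewrite -cent_class1; split=> [reg x xG | eqK x y xG yG].
  apply/(@addnI (ncdeg G x)); rewrite ncdeg_add_card_cent_class.
  by rewrite (reg x 1) ?ncdeg_add_card_cent_class.
apply/(@addIn #|cent_class G 1|).
by rewrite -{1}(eqK x xG) -(eqK y yG) !ncdeg_add_card_cent_class.
Qed.

End CentralizerClasses.

Theorem corollary2p5 (gT : finGroupType) (G : {group gT}) :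
  ~~ abelian G -> (nc_regular G <-> #|Cent G| = #|G : 'Z(G)|).
Proof.
move=> _; apply: iff_trans (nc_regularP G) _.
apply: iff_trans (iff_sym (card_eq_Cent_mul_centerP G)) _.
rewrite -(Lagrange (center_sub G)) [(#|Cent G| * _)%N]mulnC.
by split=> [/eqP | ->]; rewrite ?eqn_pmul2l ?cardG_gt0 // => /eqP.
Qed.
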